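(* Let $X$ and $Y$ be Hausdorff compact spaces and $\pi: X \to Y$ a fully closed continuous surjection. Let $y_1, \dots, y_n \in Y$ be distinct points and, for each $i = 1,\dots,n$, let $f_i$ be a real-valued continuous function on $\pi^{-1}(y_i)$. Then there exists $\tilde f \in C(X)$ such that $\tilde f|_{\pi^{-1}(y_i)} = f_i$ for $i=1,\dots,n$ and $\tilde f$ has oscillation $0$ (i.e. is constant) on $\pi^{-1}(y')$ for every $y' \in Y \setminus \{y_1,\dots,y_n\}$.
   Context: A continuous surjection $\pi: X \to Y$ between Hausdorff compacta is fully closed if for any two closed disjoint subsets $F_1, F_2 \subset X$ the set $\pi(F_1)\cap\pi(F_2)$ is finite. $C(X)$ denotes the real continuous functions on $X$. *)

From mathcomp Require Import all_boot all_order all_algebra.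
From mathcomp Require Import all_classical all_reals all_analysis.
From mathcomp Require Import Rstruct Rstruct_topology.
Set Implicit Arguments. Unset Strict Implicit. Unset Printing Implicit Defensive.
Local Open Scope classical_set_scope.

Definition fully_closed (X Y : topologicalType) (p : X -> Y) : Prop :=
  forall F1 F2 : set X, closed F1 -> closed F2 -> F1 `&` F2 = set0 ->
    finite_set (p @` F1 `&` p @` F2).

From HB Require Import structures.
From mathcomp Require Import all_boot all_order all_algebra.
From mathcomp Require Import all_classical all_reals all_analysis.
From mathcomp Require Import Rstruct Rstruct_topology.
Set Implicit Arguments. Unset Strict Implicit. Unset Printing Implicit Defensive.
Import Order.TTheory GRing.Theory Num.Theory.
Local Open Scope classical_set_scope.
Local Open Scope ring_scope.

(* Identify the points of each fibre of p over a point outside {y_1, ..., y_n}.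
   The result is normal: a closed set F has closed saturation, since near a
   point x off it only finitely many collapsed fibres can meet both a closed
   neighbourhood V of x and F, p being fully closed.  Instead of forming the
   quotient we give X the coarser topology of saturated open sets.  Nothing is
   collapsed on p^-1 {y_1, ..., y_n}, so the f_i glue to a bounded continuous
   function there, which Tietze's theorem extends to a g continuous for the
   coarse topology; such a g is continuous on X and constant on each collapsed
   fibre. *)

Definition saturated (T : Type) (R : T -> T -> Prop) (U : set T) :=
  forall a b, R a b -> U a -> U b.

Definition saturation (T : Type) (R : T -> T -> Prop) (F : set T) :=
  [set b | exists2 a, F a & R a b].

(* X with the R-saturated open sets; for an equivalence R this is the quotient
   topology of X / R pulled back to X. *)
Definition coarsening (X : topologicalType) (R : X -> X -> Prop) : Type := X.

Section CoarseningTopology.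
Context (X : topologicalType) (R : X -> X -> Prop).

Definition coarsening_open (U : set X) := open U /\ saturated R U.

Lemma coarsening_openT : coarsening_open setT.
Proof. by split; [exact: openT|]. Qed.

Lemma coarsening_openI : setI_closed coarsening_open.
Proof.
move=> U V [oU sU] [oV sV]; split; first exact: openI.
by move=> a b r [Ua Va]; split; [exact: sU r Ua|exact: sV r Va].
Qed.

Lemma coarsening_open_bigU (I : Type) (U : I -> set X) :
  (forall i, coarsening_open (U i)) -> coarsening_open (\bigcup_i U i).
Proof.
move=> oU; split; first by apply: bigcup_open => i _; case: (oU i).
by move=> a b r [i _ Uia]; exists i => //; have [_ sUi] := oU i; exact: sUi r Uia.
Qed.

HB.instance Definition _ := Choice.on (coarsening R).
HB.instance Definition _ := isOpenTopological.Build (coarsening R)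
  coarsening_openT coarsening_openI coarsening_open_bigU.

End CoarseningTopology.

Section CoarseningTheory.
Context (X : topologicalType) (R : X -> X -> Prop).
Local Notation Z := (coarsening R).

Lemma coarsening_nbhsW (x : X) (B : set X) : nbhs (x : Z) B -> nbhs x B.
Proof. by case=> U [[oU _] Ux UB]; apply: filterS UB _; exact: open_nbhs_nbhs. Qed.

Lemma coarsening_continuousW (V : topologicalType) (f : Z -> V) :
  continuous f -> continuous (f : X -> V).
Proof. by move=> cf x B /cf; exact: coarsening_nbhsW. Qed.

Lemma coarsening_nbhs_rel a b : R a b -> nbhs (a : Z) `<=` nbhs (b : Z).
Proof. by move=> r B [U [[oU sU] Ua UB]]; exists U; split => //; exact: sU r Ua. Qed.

Lemma coarsening_continuous_rel (V : topologicalType) (f : Z -> V) :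
  hausdorff_space V -> continuous f -> forall a b, R a b -> f a = f b.
Proof.
move=> hV cf a b r; apply: (cvg_unique hV (F := f @ nbhs (b : Z))); last exact: cf.
by move=> B /cf; exact: coarsening_nbhs_rel.
Qed.

Hypothesis R_sym : forall a b, R a b -> R b a.

Lemma saturatedC (U : set X) : saturated R U -> saturated R (~` U).
Proof. by move=> sU a b r nUa Ub; exact/nUa/(sU _ _ (R_sym r)). Qed.

Lemma closed_coarsening (A : set X) :
  closed A -> saturated R A -> closed (A : set Z).
Proof. by move=> cA sA; rewrite -openC; split; [rewrite openC|exact: saturatedC]. Qed.

Lemma coarsening_closed (A : set Z) :
  closed A -> closed (A : set X) /\ saturated R A.
Proof.
rewrite -openC => -[oA /saturatedC]; rewrite setCK; split => //.
by rewrite -openC.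
Qed.

Hypotheses (R_refl : forall a, R a a) (R_trans : forall a b c, R a b -> R b c -> R a c).
Hypothesis closed_saturation : forall F : set X, closed F -> closed (saturation R F).

Definition saturated_interior (U : set X) := ~` saturation R (~` U).

Lemma saturated_interior_open U : open U -> coarsening_open R (saturated_interior U).
Proof.
move=> oU; split; first by apply/closed_openC/closed_saturation; rewrite closedC.
move=> a b r nUa [c nUc rcb]; apply: nUa; exists c => //.
exact: R_trans rcb (R_sym r).
Qed.

Lemma saturated_interior_sub U : saturated_interior U `<=` U.
Proof. by move=> x nx; apply: contrapT => nUx; apply: nx; exists x. Qed.

Lemma sub_saturated_interior (A U : set X) :
  saturated R A -> A `<=` U -> A `<=` saturated_interior U.
Proof. by move=> sA AU a Aa [c nUc rca]; apply/nUc/AU; exact: sA (R_sym rca) Aa. Qed.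

Lemma coarsening_normal : normal_space X -> normal_space Z.
Proof.
move=> nX; apply/(@normal_openP Rdefinitions.R) => A B cA cB AB0.
have [cAX sA] := coarsening_closed cA; have [cBX sB] := coarsening_closed cB.
have [U [V [oU oV AU BV UV0]]] := (@normal_openP Rdefinitions.R X).1 nX _ _ cAX cBX AB0.
exists (saturated_interior U), (saturated_interior V); split.
- exact: saturated_interior_open.
- exact: saturated_interior_open.
- exact: sub_saturated_interior.
- exact: sub_saturated_interior.
- rewrite -subset0 -UV0 => z [/saturated_interior_sub Uz /saturated_interior_sub Vz].
  by split.
Qed.

Lemma nbhs_coarsening (x : X) (B : set X) :
  (forall a, R a x -> a = x) -> nbhs x B -> nbhs (x : Z) B.
Proof.
move=> isox nB; exists (saturated_interior B°); split.
- exact/saturated_interior_open/open_interior.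
- by move=> [a nBa /isox eax]; apply: nBa; rewrite eax.
- by move=> z /saturated_interior_sub; exact: interior_subset.
Qed.

Lemma within_coarsening_continuous (V : topologicalType) (A : set X) (f : X -> V) :
  (forall x, A x -> forall a, R a x -> a = x) ->
  {within A, continuous f} -> {within (A : set Z), continuous (f : Z -> V)}.
Proof.
move=> isoA /subspace_continuousP cf; apply/subspace_continuousP => x Ax B nB.
exact: nbhs_coarsening (isoA x Ax) (cf x Ax B nB).
Qed.

End CoarseningTheory.

Lemma compact_image_closed (X Y : topologicalType) (p : X -> Y) (F : set X) :
  compact [set: X] -> hausdorff_space Y -> continuous p -> closed F ->
  closed (p @` F).
Proof.
move=> cX hY pc cF; apply: compact_closed => //.
apply: continuous_compact; first exact: continuous_subspaceT.
exact: subclosed_compact cF cX _.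
Qed.

Definition collapse_fibers (X Y : Type) (p : X -> Y) (S : set Y) (a b : X) :=
  a = b \/ (p a = p b /\ ~ S (p a)).

Section CollapseFibers.
Context (X Y : topologicalType) (p : X -> Y) (S : set Y).
Local Notation R := (collapse_fibers p S).

Lemma collapse_fibers_refl a : R a a.
Proof. by left. Qed.

Lemma collapse_fibers_sym a b : R a b -> R b a.
Proof. by case=> [->|[e nS]]; [left|right; rewrite -e]. Qed.

Lemma collapse_fibers_trans a b c : R a b -> R b c -> R a c.
Proof.
case=> [->//|[eab nS]] [<-|[ebc _]]; first by right.
by right; rewrite eab ebc; split => //; rewrite -ebc -eab.
Qed.

Lemma collapse_fibers_eq a b : R a b -> p a = p b.
Proof. by case=> [->|[]]. Qed.

Lemma collapse_fibers_isolated a x : S (p x) -> R a x -> a = x.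
Proof. by move=> Sx [//|[eax nS]]; rewrite eax in nS. Qed.

Lemma collapse_coarsening_closed_preimage :
  continuous p -> closed S -> closed (p @^-1` S : set (coarsening R)).
Proof.
move=> pc cS; apply: closed_coarsening; first exact: collapse_fibers_sym.
  by apply: preimage_closed cS => x _; exact: pc.
by move=> a b /collapse_fibers_eq; rewrite /preimage /= => ->.
Qed.

Hypotheses (hX : hausdorff_space X) (cX : compact [set: X]) (hY : hausdorff_space Y).
Hypotheses (pc : continuous p) (pfc : fully_closed p).

Lemma collapse_saturation_nbhs (F : set X) (x : X) :
  closed F -> ~ F x -> S (p x) -> nbhs x (~` saturation R F).
Proof.
move=> cF nFx Sx.
have nbhsCF : nbhs x (~` F) by apply: open_nbhs_nbhs; split => //; exact: closed_openC.
have [V Vx clVF] := compact_regular hX cX filterT nbhsCF.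
have clVF0 : closure V `&` F = set0 by rewrite -subset0 => z [/clVF].
(* Full closedness: a collapsed fibre meeting both closure V and F lies over
   the finite set E. *)
pose E := (p @` closure V `&` p @` F) `\` [set p x].
have cE : closed E.
  apply: (@accessible_finite_set_closed Y).1; first exact: hausdorff_accessible.
  exact/finite_setD/(pfc (@closed_closure _ V) cF clVF0).
have nbhsE : nbhs x (p @^-1` ~` E).
  apply: pc; apply: open_nbhs_nbhs; split; first exact: closed_openC.
  by case=> _; apply.
apply: filterS2 Vx nbhsE => b Vb nEb [a Fa [eab|[eab nSa]]].
  by subst a; exact: clVF _ (subset_closure Vb) Fa.
apply: nEb; split; first by split; [exists b => //; exact: subset_closure|exists a].
by move=> /= ebx; apply: nSa; rewrite eab ebx.
Qed.

Lemma collapse_saturation_closed (F : set X) :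
  closed F -> closed (saturation R F).
Proof.
move=> cF; rewrite -openC openE => x nFx.
have [[a Fa eax]|npx] := pselect ((p @` F) (p x)).
  apply: collapse_saturation_nbhs => //.
    by move=> Fx; apply: nFx; exists x => //; left.
  apply: contrapT => nSx; apply: nFx; exists a => //; right.
  by rewrite eax.
apply: (filterS (P := p @^-1` ~` (p @` F))).
  by move=> b npb [a Fa /collapse_fibers_eq eab]; apply: npb; exists a.
apply: pc; apply: open_nbhs_nbhs; split => //.
exact/closed_openC/compact_image_closed.
Qed.

Local Notation Z := (coarsening R).

Lemma collapse_coarsening_normal : normal_space Z.
Proof.
apply: coarsening_normal (compact_normal hX cX).
- exact: collapse_fibers_sym.
- exact: collapse_fibers_refl.
- exact: collapse_fibers_trans.
- exact: collapse_saturation_closed.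
Qed.

Lemma collapse_coarsening_within_continuous (V : topologicalType) (f : X -> V) :
  {within p @^-1` S, continuous f} ->
  {within (p @^-1` S : set Z), continuous (f : Z -> V)}.
Proof.
apply: within_coarsening_continuous.
- exact: collapse_fibers_sym.
- exact: collapse_fibers_refl.
- exact: collapse_fibers_trans.
- exact: collapse_saturation_closed.
- by move=> x Sx a; exact: collapse_fibers_isolated.
Qed.

End CollapseFibers.

Section GlueOnFibers.
Context (X Y : topologicalType) (U : ptopologicalType) (p : X -> Y).
Context (n : nat) (y : 'I_n -> Y) (f : 'I_n -> X -> U).

(* [point] is a junk value off the fibres over [y]. *)
Definition glue_on_fibers (x : X) : U :=
  if [pick i | p x == y i] is Some i then f i x else point.

Hypothesis yinj : injective y.

Lemma glue_on_fibersE i x : p x = y i -> glue_on_fibers x = f i x.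
Proof.
move=> pxi; rewrite /glue_on_fibers; case: pickP => [j /eqP pxj|/(_ i)].
  by rewrite (yinj (etrans (esym pxj) pxi)).
by rewrite pxi eqxx.
Qed.

Lemma glue_on_fibers_continuous : accessible_space Y -> continuous p ->
  (forall i, {within p @^-1` [set y i], continuous (f i)}) ->
  {within p @^-1` range y, continuous glue_on_fibers}.
Proof.
move=> aY pc fc; apply/subspace_continuousP => x [i _ yix] W.
rewrite /from_subspace (glue_on_fibersE (esym yix)).
move=> /((subspace_continuousP _ _).1 (fc i) x (esym yix)).
have nbhs_fiber : nbhs x (p @^-1` ~` (range y `\` [set y i])).
  apply: pc; apply: open_nbhs_nbhs; split; last by rewrite /= -yix => -[_]; apply.
  apply: closed_openC; apply: (@accessible_finite_set_closed Y).1 aY _ _.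
  exact/finite_setD/finite_image/finite_finset.
apply: filterS2 nbhs_fiber => z nz Wfz [j _ yjz].
have pzi : p z = y i.
  by apply: contrapT => nzi; apply: nz; split; [exists j|].
by rewrite /preimage /= (glue_on_fibersE pzi); exact: Wfz.
Qed.

End GlueOnFibers.

Lemma compact_continuous_bounded (T : topologicalType) (K : realType)
    (V : normedModType K) (A : set T) (f : T -> V) :
  compact A -> {within A, continuous f} ->
  exists2 M, 0 < M & forall x, A x -> `|f x| <= M.
Proof.
move=> cA cf; have [M0 [_ bdM0]] := compact_bounded (continuous_compact cf cA).
have M0M : M0 < `|M0| + 1 by rewrite (le_lt_trans (ler_norm M0)) // ltrDl.
exists (`|M0| + 1); first by rewrite ltr_pwDr.
by move=> x Ax; apply: bdM0 => //; exists x.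
Qed.

Theorem corollary4p4 (X Y : topologicalType)
  (hX : hausdorff_space X) (cX : compact [set: X])
  (hY : hausdorff_space Y) (cY : compact [set: Y])
  (p : X -> Y) (pc : continuous p) (ps : forall y : Y, exists x : X, p x = y)
  (pfc : fully_closed p)
  (n : nat) (y : 'I_n -> Y) (yinj : injective y)
  (f : 'I_n -> X -> Rdefinitions.R)
  (fc : forall i, {within p @^-1` [set y i], continuous (f i)}) :
  exists g : X -> Rdefinitions.R,
    continuous g /\
    (forall i x, p x = y i -> g x = f i x) /\
    (forall y' : Y, (forall i, y' <> y i) ->
       forall x1 x2 : X, p x1 = y' -> p x2 = y' -> g x1 = g x2).
Proof.
have aY := hausdorff_accessible hY.
have cy : closed (range y).
  by apply: (@accessible_finite_set_closed Y).1 aY _ _; exact: finite_image _ finite_finset.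
have cA : closed (p @^-1` range y) by apply: preimage_closed cy => x _; exact: pc.
have gc := glue_on_fibers_continuous yinj aY pc fc.
have [M M0 bdM] := compact_continuous_bounded (V := Rdefinitions.R^o)
  (subclosed_compact cA cX (@subsetT _ _)) gc.
have [g [gE g_cont _]] := continuous_bounded_extension
  (collapse_coarsening_normal (S := range y) hX cX hY pc pfc)
  (collapse_coarsening_closed_preimage pc cy) M0
  (collapse_coarsening_within_continuous hX cX hY pc pfc gc) bdM.
exists g; split; [|split].
- exact: coarsening_continuousW.
- by move=> i x pxi; rewrite -gE ?inE; [exact: glue_on_fibersE|exists i].
- move=> y' ny x1 x2 px1 px2; apply: coarsening_continuous_rel g_cont _ _ _.
    exact: Rhausdorff.
  by right; rewrite px1 px2; split=> // -[i _ /esym/ny].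
Qed.
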